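(* Let $X$ be a normed linear space, $F:X\rightrightarrows\mathbb{R}^p$, $(x,y)\in\mathrm{gph}F$, with $F$ Lipschitz around $x$ and $y\in\mathcal{PE}(F(x),P)$. If $S$ is a nonempty compact subset of $X\times\mathbb{R}^p$, then the set $\mathrm{cl}\Big(\bigcup_{(v,w)\in S}\big(w+D_\uparrow F((x,y);v)\big)\Big)$ is $P$-bounded.
   Context: $P\subset\mathbb{R}^p$ is a closed convex pointed cone containing $0$ with nonempty interior; $F_\uparrow(x)=F(x)+P$. $\mathcal{E}(S,P)=\{y\in S:(y-P)\cap S=\{y\}\}$; contingent cone $T_S(z)=\{v:\exists h_k\to0^+,\exists v_k\to v,z+h_kv_k\in S\}$; $\mathcal{PE}(S,P)=\{y\in\mathcal{E}(S,P):T_{S+P}(y)\cap(-P)=\{0\}\}$. $F$ is Lipschitz around $x$ if there are $l>0$ and a neighborhood $\mathcal{O}$ of $x$ with $F(x_1)\subset F(x_2)+l\|x_1-x_2\|\mathbf{B}$ for $x_1,x_2\in\mathcal{O}$. Contingent derivative $DF(x,y)$: graph $T_{\mathrm{gph}F}(x,y)$, value at $v$ written $DF((x,y);v)$. Generalized contingent epiderivative: $D_\uparrow F((x,y);v)=\mathcal{E}(DF_\uparrow((x,y);v),P)$ (empty if $DF_\uparrow((x,y);v)$ is empty or has no minimal element). Recession cone $A^+=\{z:\exists h_k\to0^+,\exists y_k\in A,h_ky_k\to z\}$; $A$ is $P$-bounded if $A^+\cap(-P)=\{0\}$. *)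

From Stdlib Require Import Reals.
From mathcomp Require Import ssreflect ssrfun ssrbool eqtype ssrnat seq fintype bigop.
Set Implicit Arguments.
Unset Strict Implicit.
Open Scope R_scope.

Record NSpace := mkNS {
  ns_car :> Type;
  ns_add : ns_car -> ns_car -> ns_car;
  ns_opp : ns_car -> ns_car;
  ns_zero : ns_car;
  ns_scal : R -> ns_car -> ns_car;
  ns_norm : ns_car -> R }.
Arguments ns_add {_}. Arguments ns_opp {_}. Arguments ns_zero {_}.
Arguments ns_scal {_}. Arguments ns_norm {_}.

Definition ns_sub {X : NSpace} (a b : X) : X := ns_add a (ns_opp b).

Definition normed_space (X : NSpace) : Prop :=
  (forall a b c : X, ns_add a (ns_add b c) = ns_add (ns_add a b) c) /\
  (forall a b : X, ns_add a b = ns_add b a) /\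
  (forall a : X, ns_add a ns_zero = a) /\
  (forall a : X, ns_add a (ns_opp a) = ns_zero) /\
  (forall a : X, ns_scal 1 a = a) /\
  (forall (s t : R) (a : X), ns_scal s (ns_scal t a) = ns_scal (s * t) a) /\
  (forall (s t : R) (a : X), ns_scal (s + t) a = ns_add (ns_scal s a) (ns_scal t a)) /\
  (forall (s : R) (a b : X), ns_scal s (ns_add a b) = ns_add (ns_scal s a) (ns_scal s b)) /\
  (forall a : X, ns_norm a = 0 -> a = ns_zero) /\
  (forall (s : R) (a : X), ns_norm (ns_scal s a) = Rabs s * ns_norm a) /\
  (forall a b : X, ns_norm (ns_add a b) <= ns_norm a + ns_norm b).

Definition Rp (p : nat) : NSpace :=
  @mkNS ('I_p -> R)
    (fun u v i => u i + v i)
    (fun u i => - u i)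
    (fun _ => 0)
    (fun s u i => s * u i)
    (fun u => sqrt (\big[Rplus/0]_(i < p) (u i * u i))).

(* Product space X x Y with the sum norm (any product norm gives the same notions). *)
Definition prodNS (X Y : NSpace) : NSpace :=
  @mkNS (X * Y)%type
    (fun a b => (ns_add a.1 b.1, ns_add a.2 b.2))
    (fun a => (ns_opp a.1, ns_opp a.2))
    (ns_zero, ns_zero)
    (fun s a => (ns_scal s a.1, ns_scal s a.2))
    (fun a => ns_norm a.1 + ns_norm a.2).

Definition seq_conv {X : NSpace} (u : nat -> X) (l : X) : Prop :=
  forall eps, 0 < eps -> exists N, forall n, (N <= n)%nat -> ns_norm (ns_sub (u n) l) < eps.

Definition rseq_to0plus (h : nat -> R) : Prop :=
  (forall k, 0 < h k) /\ Un_cv h 0.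

(* cl_set (sequential, = topological cl_set in a normed space) *)
Definition cl_set {X : NSpace} (A : X -> Prop) : X -> Prop :=
  fun z => exists u : nat -> X, (forall n, A (u n)) /\ seq_conv u z.

(* compactness (sequential, = compactness in a normed space) *)
Definition seq_compact {X : NSpace} (S : X -> Prop) : Prop :=
  forall u : nat -> X, (forall n, S (u n)) ->
  exists (phi : nat -> nat) (l : X),
    (forall n, (phi n < phi n.+1)%nat) /\ S l /\ seq_conv (fun n => u (phi n)) l.

Definition contingent_cone {X : NSpace} (S : X -> Prop) (z : X) : X -> Prop :=
  fun v => exists (h : nat -> R) (vk : nat -> X),
    rseq_to0plus h /\ seq_conv vk v /\
    forall k, S (ns_add z (ns_scal (h k) (vk k))).

Definition recession_cone {X : NSpace} (A : X -> Prop) : X -> Prop :=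
  fun z => exists (h : nat -> R) (yk : nat -> X),
    rseq_to0plus h /\ (forall k, A (yk k)) /\
    seq_conv (fun k => ns_scal (h k) (yk k)) z.

Definition good_cone {p : nat} (P : Rp p -> Prop) : Prop :=
  P ns_zero /\
  (forall z, cl_set P z -> P z) /\
  (forall (s : R) y, 0 <= s -> P y -> P (ns_scal s y)) /\
  (forall y1 y2, P y1 -> P y2 -> P (ns_add y1 y2)) /\
  (forall y, P y -> P (ns_opp y) -> y = ns_zero) /\
  (exists y0 r, 0 < r /\ forall y, ns_norm (ns_sub y y0) < r -> P y).

Definition minimal_pts {p : nat} (S P : Rp p -> Prop) : Rp p -> Prop :=
  fun y => S y /\
    forall z, ((exists q, P q /\ z = ns_sub y q) /\ S z) <-> z = y.

Definition set_plus {p : nat} (S P : Rp p -> Prop) : Rp p -> Prop :=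
  fun z => exists s q, S s /\ P q /\ z = ns_add s q.

Definition proper_minimal_pts {p : nat} (S P : Rp p -> Prop) : Rp p -> Prop :=
  fun y => minimal_pts S P y /\
    forall v, (contingent_cone (set_plus S P) y v /\ P (ns_opp v)) <-> v = ns_zero.

Definition graph {X : NSpace} {p : nat} (F : X -> Rp p -> Prop) : prodNS X (Rp p) -> Prop :=
  fun a => F a.1 a.2.

Definition lipschitz_around {X : NSpace} {p : nat} (F : X -> Rp p -> Prop) (x : X) : Prop :=
  exists l delta, 0 < l /\ 0 < delta /\
    forall x1 x2 : X, ns_norm (ns_sub x1 x) < delta -> ns_norm (ns_sub x2 x) < delta ->
      forall y1, F x1 y1 -> exists y2, F x2 y2 /\
        ns_norm (ns_sub y1 y2) <= l * ns_norm (ns_sub x1 x2).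

Definition epi_map {X : NSpace} {p : nat} (F : X -> Rp p -> Prop) (P : Rp p -> Prop)
  : X -> Rp p -> Prop := fun x => set_plus (F x) P.

Definition cont_deriv {X : NSpace} {p : nat} (F : X -> Rp p -> Prop) (x : X) (y : Rp p)
  (v : X) : Rp p -> Prop :=
  fun w => contingent_cone (graph F) (x, y) (v, w).

(* generalized contingent epiderivative D_↑F((x,y); v) = E(DF_↑((x,y);v), P) *)
Definition gen_cont_epideriv {X : NSpace} {p : nat} (F : X -> Rp p -> Prop)
  (P : Rp p -> Prop) (x : X) (y : Rp p) (v : X) : Rp p -> Prop :=
  minimal_pts (cont_deriv (epi_map F P) x y v) P.

Definition P_bounded {p : nat} (P A : Rp p -> Prop) : Prop :=
  forall z, (recession_cone A z /\ P (ns_opp z)) <-> z = ns_zero.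

(* The proof of proposition6p7 runs entirely through the tangent cone
   T := T_{F(x)+P}(y), which is a closed cone with T ∩ (-P) = {0} because y is a
   properly minimal point of F(x).

   1. Every element d of DF_↑((x,y); v) lies within distance p·l·(‖v‖+1) of T,
      where l is a Lipschitz constant of F: the Lipschitz property pulls the
      approximating points of the graph of F_↑ back to the fibre over x
      (epideriv_near_tangent).
   2. A set lying within bounded distance of such a cone has its recession cone
      inside T; hence it is P-bounded as soon as it is nonempty
      (P_bounded_near_cone), and its lower sections A ∩ (w - P) are bounded
      (lower_sections_bounded).
   3. DF_↑((x,y); v) is nonempty (P has interior points), closed (contingent cones
      are closed) and has bounded lower sections by step 2, so by a Pareto-type
      existence theorem in R^p (minimal_point_exists) D_↑F((x,y); v) is nonempty.
   4. For compact S the union ⋃_{(v,w)∈S} (w + D_↑F((x,y);v)) is within bounded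
      distance of T (step 1, S bounded), so is its closure, and it is nonempty by
      step 3; step 2 concludes. *)

From Pilot Require Import Defs.
From Stdlib Require Import Reals Lra Rtopology Classical ClassicalEpsilon FunctionalExtensionality.
From mathcomp Require Import ssreflect ssrfun ssrbool eqtype ssrnat fintype bigop.
From HB Require Import structures.
Set Implicit Arguments.
Unset Strict Implicit.
Open Scope R_scope.

Lemma RplusA : associative Rplus.
Proof. by move=> a b c; ring. Qed.
HB.instance Definition _ := Monoid.isComLaw.Build R 0 Rplus RplusA Rplus_comm Rplus_0_l.

Lemma sum_le (n : nat) (f g : 'I_n -> R) : (forall i, f i <= g i) ->
  \big[Rplus/0]_(i < n) f i <= \big[Rplus/0]_(i < n) g i.
Proof.
move=> H; apply: (big_ind2 (fun a b => a <= b)); [lra | move=> *; lra | move=> i _; exact: H].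
Qed.

Lemma sum_ge0 (n : nat) (f : 'I_n -> R) : (forall i, 0 <= f i) ->
  0 <= \big[Rplus/0]_(i < n) f i.
Proof.
move=> H; apply: (big_ind (fun a => 0 <= a)); [lra | move=> *; lra | move=> i _; exact: H].
Qed.

Lemma sum_const (n : nat) (c : R) : \big[Rplus/0]_(i < n) c = INR n * c.
Proof.
elim: n => [|n IH]; first by rewrite big_ord0 /=; ring.
by rewrite big_ord_recr S_INR /= IH; ring.
Qed.

Notation enorm u := (@ns_norm (Rp _) u).

Section EuclideanNorm.
Variable p : nat.
Implicit Types u v w : Rp p.

Definition norm1 u : R := \big[Rplus/0]_(i < p) Rabs (u i).

(* The constant of the quasi-triangle inequality enorm_triang. *)
Definition Kp : R := INR p + 1.

Lemma Kp_ge1 : 1 <= Kp.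
Proof. rewrite /Kp; have := pos_INR p; lra. Qed.

Lemma Kp_pos : 0 < Kp.
Proof. have := Kp_ge1; lra. Qed.

Lemma Rp_ext u v : (forall i, u i = v i) -> u = v.
Proof. by move=> H; apply: functional_extensionality. Qed.

Lemma enorm_ge0 u : 0 <= enorm u.
Proof. exact: sqrt_pos. Qed.

Lemma coord_le u i : Rabs (u i) <= enorm u.
Proof.
rewrite /= -sqrt_Rsqr_abs; apply: sqrt_le_1_alt.
rewrite (bigD1 i) //= /Rsqr -[X in X <= _]Rplus_0_r; apply: Rplus_le_compat_l.
by apply: (big_ind (fun a => 0 <= a)); [lra | move=> *; lra | move=> j _; nra].
Qed.

Lemma enorm_le_norm1 u : enorm u <= norm1 u.
Proof.
have [H1 H2] : 0 <= norm1 u /\ \big[Rplus/0]_(i < p) (u i * u i) <= norm1 u * norm1 u.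
  rewrite /norm1; apply: (big_ind2 (fun a b => 0 <= b /\ a <= b * b)).
  - lra.
  - by move=> a1 b1 a2 b2 [? ?] [? ?]; split; nra.
  - move=> i _; split; first exact: Rabs_pos.
    by rewrite -Rabs_mult Rabs_right; [lra | nra].
by rewrite /= -(sqrt_square (norm1 u)) //; apply: sqrt_le_1_alt.
Qed.

Lemma norm1_le u : norm1 u <= INR p * enorm u.
Proof. by rewrite -sum_const; apply: sum_le => i; apply: coord_le. Qed.

Lemma enorm_triang u v : enorm (ns_add u v) <= Kp * (enorm u + enorm v).
Proof.
have N1D : norm1 (ns_add u v) <= norm1 u + norm1 v.
  by rewrite /norm1 -big_split /=; apply: sum_le => i; apply: Rabs_triang.
have := enorm_le_norm1 (ns_add u v); have := norm1_le u; have := norm1_le v.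
have := enorm_ge0 u; have := enorm_ge0 v; rewrite /Kp; nra.
Qed.

Lemma enorm_scal s u : enorm (ns_scal s u) = Rabs s * enorm u.
Proof.
rewrite /=.
have -> : \big[Rplus/0]_(i < p) (s * u i * (s * u i))
          = (s * s) * \big[Rplus/0]_(i < p) (u i * u i).
  apply: (big_ind2 (fun a b => a = s * s * b)); [ring | move=> ? ? ? ? -> ->; ring | move=> *; ring].
rewrite sqrt_mult; [| nra | apply: sum_ge0 => i; nra].
by rewrite -/(Rsqr s) sqrt_Rsqr_abs.
Qed.

Lemma enorm_sub_sym u v : enorm (ns_sub u v) = enorm (ns_sub v u).
Proof. by rewrite /=; congr sqrt; apply: eq_bigr => i _; ring. Qed.

Lemma enorm_sub_triang u v w :
  enorm (ns_sub u w) <= Kp * (enorm (ns_sub u v) + enorm (ns_sub v w)).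
Proof.
have -> : ns_sub u w = ns_add (ns_sub u v) (ns_sub v w) by apply: Rp_ext => i /=; ring.
exact: enorm_triang.
Qed.

Lemma enorm_opp u : enorm (ns_opp u) = enorm u.
Proof. by rewrite /=; congr sqrt; apply: eq_bigr => i _; ring. Qed.

Lemma sub_zero u : ns_sub u ns_zero = u.
Proof. by apply: Rp_ext => i /=; ring. Qed.

Lemma sub_self u : ns_sub u u = ns_zero.
Proof. by apply: Rp_ext => i /=; ring. Qed.

Lemma sub_eq0 u v : ns_sub u v = ns_zero -> u = v.
Proof.
by move=> H; apply: Rp_ext => i; have := f_equal (fun w : Rp p => w i) H; rewrite /=; lra.
Qed.

End EuclideanNorm.

Lemma inv_pos n : 0 < / (INR n + 1).
Proof. apply: Rinv_0_lt_compat; have := pos_INR n; lra. Qed.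

Lemma inv_le1 n : / (INR n + 1) <= 1.
Proof. by rewrite -Rinv_1; apply: Rinv_le_contravar; [lra | have := pos_INR n; lra]. Qed.

Lemma inv_small eps : 0 < eps -> exists N, forall n, (N <= n)%N -> / (INR n + 1) < eps.
Proof.
move=> he; have [N [HN HN0]] := archimed_cor1 eps he.
exists N => n /leP Hn.
have h1 : 0 < INR N by apply: lt_0_INR.
have h2 : INR N <= INR n by apply: le_INR.
by apply: Rle_lt_trans HN; apply: Rinv_le_contravar; lra.
Qed.

Lemma inv_mono n m : (n <= m)%N -> / (INR m + 1) <= / (INR n + 1).
Proof.
move=> /leP H; apply: Rinv_le_contravar; first by have := pos_INR n; lra.
have := le_INR _ _ H; lra.
Qed.

Lemma Un_cv_iff (u : nat -> R) l : Un_cv u l <->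
  forall eps, 0 < eps -> exists N, forall n, (N <= n)%N -> Rabs (u n - l) < eps.
Proof.
by split=> H eps he; have [N HN] := H eps he; exists N => n Hn; apply: HN; apply/leP.
Qed.

Lemma Un_cv_const c : Un_cv (fun _ => c) c.
Proof. by apply/Un_cv_iff => eps he; exists 0%N => n _; rewrite Rminus_diag Rabs_R0. Qed.

Lemma Un_cv_inv : Un_cv (fun n => / (INR n + 1)) 0.
Proof.
apply/Un_cv_iff => eps he; have [N HN] := inv_small he; exists N => n Hn.
by rewrite Rminus_0_r Rabs_right; [exact: HN | have := inv_pos n; lra].
Qed.

Lemma Un_cv_cinv c : Un_cv (fun n => c * / (INR n + 1)) 0.
Proof. by have := CV_mult _ _ c 0 (Un_cv_const c) Un_cv_inv; rewrite Rmult_0_r. Qed.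

Lemma cinv_to0plus c : 0 < c -> rseq_to0plus (fun n => c * / (INR n + 1)).
Proof.
by move=> hc; split; [move=> n; apply: Rmult_lt_0_compat => //; apply: inv_pos | apply: Un_cv_cinv].
Qed.

Definition strict_incr (phi : nat -> nat) : Prop := forall n, (phi n < phi n.+1)%N.

Lemma incr_ge phi : strict_incr phi -> forall n, (n <= phi n)%N.
Proof. by move=> H; elim=> [|n IH] //; apply: leq_ltn_trans IH (H n). Qed.

Lemma incr_mono phi : strict_incr phi -> forall n m, (n <= m)%N -> (phi n <= phi m)%N.
Proof.
move=> H n m /subnK <-; elim: (m - n)%N => [|k IH] //.
by rewrite addSn; apply: leq_trans IH (ltnW (H _)).
Qed.

Lemma incr_comp phi psi : strict_incr phi -> strict_incr psi -> strict_incr (fun n => phi (psi n)).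
Proof. by move=> H1 H2 n; apply: leq_trans (H1 _) (incr_mono H1 (H2 n)). Qed.

Lemma conv_subseq (Y : NSpace) (u : nat -> Y) l phi : seq_conv u l -> strict_incr phi ->
  seq_conv (fun n => u (phi n)) l.
Proof.
move=> H Hp eps he; have [N HN] := H eps he; exists N => n Hn; apply: HN.
exact: leq_trans Hn (incr_ge Hp n).
Qed.

Lemma Un_cv_subseq (u : nat -> R) l phi : Un_cv u l -> strict_incr phi ->
  Un_cv (fun n => u (phi n)) l.
Proof.
move=> /Un_cv_iff H Hp; apply/Un_cv_iff => eps he; have [N HN] := H eps he.
by exists N => n Hn; apply: HN; apply: leq_trans Hn (incr_ge Hp n).
Qed.

(* Bolzano-Weierstrass, in the form "a bounded real sequence has a convergent
   subsequence", derived from the cluster-point version of the library. *)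
Lemma BW_R (a : nat -> R) M : (forall n, Rabs (a n) <= M) ->
  exists phi l, strict_incr phi /\ Un_cv (fun n => a (phi n)) l.
Proof.
move=> HM.
have HX : forall n, (fun c => - M <= c <= M) (a n).
  by move=> n /=; have := HM n; have := Rle_abs (a n); have := Rle_abs (- a n); rewrite Rabs_Ropp; lra.
have [l Hl] := Bolzano_Weierstrass a _ (compact_P3 (-M) M) HX.
have Hg : forall Nk : nat * nat, exists m, (Nk.1 <= m)%N /\ Rabs (a m - l) < / (INR Nk.2 + 1).
  move=> [N k] /=; have hpos := inv_pos k.
  have [m [Hm Hv]] := Hl (disc l (mkposreal _ hpos)) N (ex_intro _ (mkposreal _ hpos) (fun y h => h)).
  by exists m; split; [apply/leP | exact Hv].
have [g Hg'] := choice _ Hg.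
pose phi := fix f (n : nat) : nat := if n is n'.+1 then g ((f n').+1, n) else g (0%N, 0%N).
have Hphi : forall n, (phi n < phi n.+1)%N /\ Rabs (a (phi n) - l) < / (INR n + 1).
  case=> [|n]; split; rewrite /=.
  - exact: (proj1 (Hg' ((g (0, 0)).+1, 1)%N)).
  - exact: (proj2 (Hg' (0, 0)%N)).
  - exact: (proj1 (Hg' ((phi n.+1).+1, n.+2))).
  - exact: (proj2 (Hg' ((phi n).+1, n.+1))).
exists phi, l; split; first by move=> n; case: (Hphi n).
apply/Un_cv_iff => eps he; have [N HN] := inv_small he; exists N => n Hn.
by have [_ h] := Hphi n; have := HN n Hn; lra.
Qed.

Section EuclideanConvergence.
Variable p : nat.
Implicit Types (u v : nat -> Rp p) (a b : Rp p).

Lemma conv_coord u a : seq_conv u a <-> forall i, Un_cv (fun n => u n i) (a i).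
Proof.
split.
- move=> H i; apply/Un_cv_iff => eps he; have [N HN] := H eps he; exists N => n Hn.
  by move: (coord_le (ns_sub (u n) a) i) (HN n Hn); rewrite /= /Rminus; lra.
- move=> H eps he.
  have he' : 0 < eps / Kp p by apply: Rdiv_lt_0_compat => //; have := Kp_ge1 p; lra.
  have [Nf HNf] := choice _ (fun i => proj1 (Un_cv_iff _ _) (H i) _ he').
  exists (\max_(i < p) Nf i) => n Hn.
  apply: Rle_lt_trans (enorm_le_norm1 _) _.
  apply: (@Rle_lt_trans _ (INR p * (eps / Kp p))).
    rewrite -sum_const; apply: sum_le => i; apply: Rlt_le; apply: HNf.
    exact: leq_trans (leq_bigmax i) Hn.
  have -> : INR p * (eps / Kp p) = eps - eps / Kp p.
    by rewrite /Kp; field; have := pos_INR p; lra.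
  lra.
Qed.

Lemma conv_add u v a b : seq_conv u a -> seq_conv v b ->
  seq_conv (fun n => ns_add (u n) (v n)) (ns_add a b).
Proof.
move=> /conv_coord H1 /conv_coord H2; apply/conv_coord => i /=.
exact: CV_plus (H1 i) (H2 i).
Qed.

Lemma conv_sub u v a b : seq_conv u a -> seq_conv v b ->
  seq_conv (fun n => ns_sub (u n) (v n)) (ns_sub a b).
Proof.
move=> H1 /conv_coord H2; apply: conv_add H1 _; apply/conv_coord => i /=.
exact: CV_opp (H2 i).
Qed.

Lemma conv_scal (s : nat -> R) c u a : Un_cv s c -> seq_conv u a ->
  seq_conv (fun n => ns_scal (s n) (u n)) (ns_scal c a).
Proof. by move=> Hs /conv_coord H1; apply/conv_coord => i /=; apply: CV_mult Hs (H1 i). Qed.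

Lemma conv_const a : seq_conv (fun _ => a) a.
Proof. by apply/conv_coord => i; apply: Un_cv_const. Qed.

Lemma conv_unique u a b : seq_conv u a -> seq_conv u b -> a = b.
Proof.
move=> /conv_coord H1 /conv_coord H2; apply: Rp_ext => i.
exact: UL_sequence (H1 i) (H2 i).
Qed.

Lemma conv_ext u v a : (forall n, u n = v n) -> seq_conv u a -> seq_conv v a.
Proof. by move=> H H1 eps he; have [N HN] := H1 eps he; exists N => n Hn; rewrite -H; apply: HN. Qed.

Lemma conv_small u (e : nat -> R) : (forall n, enorm (u n) <= e n) -> Un_cv e 0 ->
  seq_conv u ns_zero.
Proof.
move=> H /Un_cv_iff He eps he; have [N HN] := He eps he; exists N => n Hn.
rewrite sub_zero; have := HN n Hn; rewrite Rminus_0_r; have := H n.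
have := Rle_abs (e n); lra.
Qed.

Lemma conv_enorm0 u : seq_conv u ns_zero -> Un_cv (fun n => enorm (u n)) 0.
Proof.
move=> H; apply/Un_cv_iff => eps he; have [N HN] := H eps he; exists N => n Hn.
rewrite Rminus_0_r Rabs_right; last by apply: Rle_ge; apply: enorm_ge0.
by have := HN n Hn; rewrite sub_zero.
Qed.

Lemma lim_bound u a M : seq_conv u a -> (forall n, enorm (u n) <= M) -> enorm a <= INR p * M.
Proof.
move=> /conv_coord H HM; apply: Rle_trans (enorm_le_norm1 _) _.
rewrite -sum_const; apply: sum_le => i.
apply: Rnot_lt_le => hlt.
have he : 0 < Rabs (a i) - M by lra.
have [N HN] := proj1 (Un_cv_iff _ _) (H i) _ he.
have h1 := HN N (leqnn N); have h2 := coord_le (u N) i; have h3 := HM N.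
have h4 := Rabs_triang (a i - u N i) (u N i); rewrite Rabs_minus_sym in h4.
have h5 : a i - u N i + u N i = a i by ring.
rewrite h5 in h4; lra.
Qed.

(* Bolzano-Weierstrass in R^p, by successive extraction in each coordinate. *)
Lemma BW_Rp u M : (forall n, enorm (u n) <= M) ->
  exists phi a, strict_incr phi /\ seq_conv (fun n => u (phi n)) a.
Proof.
move=> HM.
have Hk : forall k : nat, exists phi, strict_incr phi /\
   forall i : 'I_p, (i < k)%N -> exists li, Un_cv (fun n => u (phi n) i) li.
  elim=> [|k [phi [Hphi IH]]]; first by exists id; split => // n.
  case: (ltnP k p) => Hkp; last first.
    by exists phi; split=> // i _; apply: IH; apply: leq_trans (ltn_ord i) Hkp.
  have [psi [l0 [Hpsi Hl0]]] := @BW_R (fun n => u (phi n) (Ordinal Hkp)) M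
    (fun n => Rle_trans _ _ _ (coord_le _ _) (HM _)).
  exists (fun n => phi (psi n)); split; first exact: incr_comp.
  move=> i; rewrite ltnS leq_eqVlt => /orP [/eqP Hik | Hik].
    by exists l0; have -> : i = Ordinal Hkp by apply: ord_inj.
  have [li Hli] := IH i Hik; exists li.
  exact: (@Un_cv_subseq (fun n => u (phi n) i)).
have [phi [Hphi Hl]] := Hk p.
have [a Ha] := choice _ (fun i : 'I_p => Hl i (ltn_ord i)).
by exists phi, a; split => //; apply/conv_coord.
Qed.

Lemma cl_set_self (A : Rp p -> Prop) a : A a -> cl_set A a.
Proof. by move=> Ha; exists (fun _ => a); split; [| apply: conv_const]. Qed.

End EuclideanConvergence.

Section NormedSpace.
Variable X : NSpace.
Hypothesis HX : normed_space X.
Implicit Types a b c : X.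

Lemma X_assoc a b c : ns_add a (ns_add b c) = ns_add (ns_add a b) c.
Proof. by case: HX. Qed.
Lemma X_comm a b : ns_add a b = ns_add b a.
Proof. by case: HX => _ []. Qed.
Lemma X_add0 a : ns_add a ns_zero = a.
Proof. by case: HX => _ [] _ []. Qed.
Lemma X_addN a : ns_add a (ns_opp a) = ns_zero.
Proof. by case: HX => _ [] _ [] _ []. Qed.
Lemma X_scal1 a : ns_scal 1 a = a.
Proof. by case: HX => _ [] _ [] _ [] _ []. Qed.
Lemma X_scalA s t a : ns_scal s (ns_scal t a) = ns_scal (s * t) a.
Proof. by case: HX => _ [] _ [] _ [] _ [] _ []. Qed.
Lemma X_scalDl s t a : ns_scal (s + t) a = ns_add (ns_scal s a) (ns_scal t a).
Proof. by case: HX => _ [] _ [] _ [] _ [] _ [] _ []. Qed.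
Lemma X_scalDr s a b : ns_scal s (ns_add a b) = ns_add (ns_scal s a) (ns_scal s b).
Proof. by case: HX => _ [] _ [] _ [] _ [] _ [] _ [] _ []. Qed.
Lemma X_normZ s a : ns_norm (ns_scal s a) = Rabs s * ns_norm a.
Proof. by case: HX => _ [] _ [] _ [] _ [] _ [] _ [] _ [] _ [] _ []. Qed.
Lemma X_triang a b : ns_norm (ns_add a b) <= ns_norm a + ns_norm b.
Proof. by case: HX => _ [] _ [] _ [] _ [] _ [] _ [] _ [] _ [] _ [] _. Qed.

Lemma X_scal0 a : ns_scal 0 a = ns_zero.
Proof.
have H : ns_scal 0 a = ns_add (ns_scal 0 a) (ns_scal 0 a) by rewrite -X_scalDl Rplus_0_r.
by rewrite -(X_addN (ns_scal 0 a)) {2}H -X_assoc X_addN X_add0.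
Qed.

Lemma X_scalm1 a : ns_scal (-1) a = ns_opp a.
Proof.
have E : ns_add (ns_scal (-1) a) a = ns_zero.
  by rewrite -{2}(X_scal1 a) -X_scalDl (_ : -1 + 1 = 0) ?X_scal0 //; ring.
by rewrite -(X_add0 (ns_scal _ a)) -(X_addN a) X_assoc E X_comm X_add0.
Qed.

Lemma X_norm0 : ns_norm (@ns_zero X) = 0.
Proof. by rewrite -(X_scal0 ns_zero) X_normZ Rabs_R0 Rmult_0_l. Qed.

Lemma X_norm_ge0 a : 0 <= ns_norm a.
Proof.
have := X_triang a (ns_opp a).
by rewrite X_addN X_norm0 -X_scalm1 X_normZ Rabs_Ropp Rabs_R1; lra.
Qed.

Lemma X_sub_self a : ns_sub a a = ns_zero.
Proof. exact: X_addN. Qed.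

Lemma X_sub_triang a b c : ns_norm (ns_sub a c) <= ns_norm (ns_sub a b) + ns_norm (ns_sub b c).
Proof.
have -> : ns_sub a c = ns_add (ns_sub a b) (ns_sub b c).
  by rewrite /ns_sub -X_assoc (X_assoc (ns_opp b)) (X_comm (ns_opp b)) X_addN
     (X_comm ns_zero) X_add0.
exact: X_triang.
Qed.

Lemma X_norm_le a b : ns_norm a <= ns_norm (ns_sub a b) + ns_norm b.
Proof.
have E : ns_add (ns_sub a b) b = a.
  by rewrite /ns_sub -X_assoc (X_comm (ns_opp b)) X_addN X_add0.
by rewrite -{1}E; apply: X_triang.
Qed.

Lemma X_conv_const a : seq_conv (fun _ => a) a.
Proof. by move=> eps he; exists 0%N => n _; rewrite X_sub_self X_norm0. Qed.

Lemma X_sub_step (x v : X) h : ns_sub (ns_add x (ns_scal h v)) x = ns_scal h v.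
Proof. by rewrite /ns_sub (X_comm x) -X_assoc X_addN X_add0. Qed.

Lemma X_norm_sub_sym a b : ns_norm (ns_sub a b) = ns_norm (ns_sub b a).
Proof.
have -> : ns_sub a b = ns_scal (-1) (ns_sub b a).
  rewrite /ns_sub X_scalDr -[ns_opp a]X_scalm1 X_scalA X_scalm1 (_ : -1 * -1 = 1) ?X_scal1;
    last by ring.
  by rewrite X_comm.
by rewrite X_normZ Rabs_Ropp Rabs_R1 Rmult_1_l.
Qed.

End NormedSpace.

Lemma prod_norm_sub (X Y : NSpace) (a b : prodNS X Y) :
  ns_norm (ns_sub a b) = ns_norm (ns_sub a.1 b.1) + ns_norm (ns_sub a.2 b.2).
Proof. by []. Qed.

Lemma prod_conv (X : NSpace) p (u : nat -> prodNS X (Rp p)) (a : X) (b : Rp p) :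
  normed_space X ->
  (seq_conv u (a, b) <-> seq_conv (fun n => (u n).1) a /\ seq_conv (fun n => (u n).2) b).
Proof.
move=> HX; split.
- move=> H; split=> eps he; have [N HN] := H eps he; exists N => n Hn;
  have := HN n Hn; rewrite prod_norm_sub;
  have := X_norm_ge0 HX (ns_sub (u n).1 a); have := enorm_ge0 (ns_sub (u n).2 b); rewrite /=; lra.
- move=> [H1 H2] eps he.
  have [N1 HN1] := H1 (eps / 2) ltac:(lra); have [N2 HN2] := H2 (eps / 2) ltac:(lra).
  exists (maxn N1 N2) => n Hn; rewrite prod_norm_sub.
  have := HN1 n (leq_trans (leq_maxl _ _) Hn); have := HN2 n (leq_trans (leq_maxr _ _) Hn).
  rewrite /=; lra.
Qed.

Definition seq_closed {Y : NSpace} (A : Y -> Prop) : Prop :=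
  forall (u : nat -> Y) l, (forall n, A (u n)) -> seq_conv u l -> A l.

Definition quasi_triangle (Y : NSpace) (K : R) : Prop :=
  forall a b c : Y, ns_norm (ns_sub a c) <= K * (ns_norm (ns_sub a b) + ns_norm (ns_sub b c)).

Lemma prod_quasi_triangle (X : NSpace) p :
  normed_space X -> quasi_triangle (prodNS X (Rp p)) (Kp p).
Proof.
move=> HX a b c; rewrite !prod_norm_sub.
have := X_sub_triang HX a.1 b.1 c.1; have := enorm_sub_triang a.2 b.2 c.2; have := Kp_ge1 p.
have := X_norm_ge0 HX (ns_sub a.1 b.1); have := X_norm_ge0 HX (ns_sub b.1 c.1); nra.
Qed.

Lemma contingent_cone_closed (Y : NSpace) (K : R) (S : Y -> Prop) (z : Y) :
  0 < K -> quasi_triangle Y K -> seq_closed (contingent_cone S z).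
Proof.
move=> HK Htri vs v Hvs Hc.
(* for each n, one point of the n-th approximating sequence, chosen 1/(n+1)-close *)
have Hpick : forall n, exists hu : R * Y, 0 < hu.1 < / (INR n + 1) /\
    ns_norm (ns_sub hu.2 (vs n)) < / (INR n + 1) /\ S (ns_add z (ns_scal hu.1 hu.2)).
  move=> n; have [h [us [[Hh0 Hh] [Hu HS]]]] := Hvs n.
  have [N1 HN1] := proj1 (Un_cv_iff _ _) Hh _ (inv_pos n).
  have [N2 HN2] := Hu _ (inv_pos n).
  exists (h (maxn N1 N2), us (maxn N1 N2)); split; [| split; [exact: HN2 _ (leq_maxr _ _) | exact: HS]].
  have := HN1 _ (leq_maxl N1 N2); rewrite Rminus_0_r => /Rabs_def2 [? _].
  by split; [apply: Hh0 | ].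
have [hu Hhu] := choice _ Hpick.
exists (fun n => (hu n).1), (fun n => (hu n).2); split; [split | split].
- by move=> n; case: (Hhu n) => [[]].
- apply/Un_cv_iff => eps he; have [N HN] := inv_small he; exists N => n Hn.
  have [[h0 h1] _] := Hhu n; have := HN n Hn.
  by rewrite Rminus_0_r Rabs_right; lra.
- move=> eps he.
  have he' : 0 < eps / (2 * K) by apply: Rdiv_lt_0_compat; lra.
  have [N1 HN1] := inv_small he'; have [N2 HN2] := Hc _ he'.
  exists (maxn N1 N2) => n Hn.
  have h1 := HN1 n (leq_trans (leq_maxl _ _) Hn); have h2 := HN2 n (leq_trans (leq_maxr _ _) Hn).
  have [_ [h3 _]] := Hhu n.
  apply: Rle_lt_trans (Htri (hu n).2 (vs n) v) _.
  have -> : eps = K * (eps / (2 * K) + eps / (2 * K)) by field; lra.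
  by apply: Rmult_lt_compat_l => //; lra.
- by move=> n; case: (Hhu n) => _ [].
Qed.

Lemma contingent_cone_scal p (S : Rp p -> Prop) z u s :
  contingent_cone S z u -> 0 < s -> contingent_cone S z (ns_scal s u).
Proof.
move=> [h [vk [[Hh0 Hh] [Hv Hm]]]] hs.
exists (fun k => h k * / s), (fun k => ns_scal s (vk k)); split; [split | split].
- by move=> k; apply: Rmult_lt_0_compat => //; apply: Rinv_0_lt_compat.
- by have := CV_mult h (fun _ => / s) 0 (/ s) Hh (Un_cv_const _); rewrite Rmult_0_l.
- exact: conv_scal (Un_cv_const _) Hv.
- move=> k; rewrite (_ : ns_scal _ _ = ns_scal (h k) (vk k)) //.
  by apply: Rp_ext => i /=; field; lra.
Qed.

Section OrderingCone.
Variables (p : nat) (P : Rp p -> Prop).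
Hypothesis HP : good_cone P.
Implicit Types (A T : Rp p -> Prop) (a w z : Rp p).

Lemma cone0 : P ns_zero.
Proof. by case: HP. Qed.

Lemma cone_closed : seq_closed P.
Proof. by case: HP => _ [H _] u l Hu Hc; apply: H; exists u. Qed.

Lemma cone_scal s a : 0 <= s -> P a -> P (ns_scal s a).
Proof. by case: HP => _ [_ [H _]]; apply: H. Qed.

Lemma cone_add a b : P a -> P b -> P (ns_add a b).
Proof. by case: HP => _ [_ [_ [H _]]]; apply: H. Qed.

Lemma cone_pointed a : P a -> P (ns_opp a) -> a = ns_zero.
Proof. by case: HP => _ [_ [_ [_ [H _]]]]; apply: H. Qed.

(* A large multiple of an interior point of P absorbs every perturbation of norm
   at most r. *)
Lemma cone_absorbs r : 0 <= r -> exists e, forall g, enorm g <= r -> P (ns_add e g).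
Proof.
move=> hr; case: HP => _ [_ [_ [_ [_ [y0 [rho [Hrho Hball]]]]]]].
pose t := (r + 1) / rho.
have ht : 0 < t by apply: Rdiv_lt_0_compat; lra.
exists (ns_scal t y0) => g hg.
have -> : ns_add (ns_scal t y0) g = ns_scal t (ns_add y0 (ns_scal (/ t) g)).
  by apply: Rp_ext => i /=; field; lra.
apply: cone_scal; first lra.
apply: Hball.
have -> : ns_sub (ns_add y0 (ns_scal (/ t) g)) y0 = ns_scal (/ t) g.
  by apply: Rp_ext => i /=; ring.
rewrite enorm_scal Rabs_right; last by apply: Rle_ge; apply: Rlt_le; apply: Rinv_0_lt_compat.
have -> : rho = / t * (r + 1) by rewrite /t; field; lra.
by apply: Rmult_lt_compat_l; [apply: Rinv_0_lt_compat | lra].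
Qed.

Definition lower_section A w : Rp p -> Prop := fun a => A a /\ P (ns_sub w a).

Lemma lower_section_refl A w : A w -> lower_section A w w.
Proof. by move=> Hw; split => //; rewrite sub_self; apply: cone0. Qed.

Lemma lower_section_trans A w z a :
  lower_section A w z -> lower_section A z a -> lower_section A w a.
Proof.
move=> [_ Hwz] [Ha Hza]; split => //.
rewrite (_ : ns_sub w a = ns_add (ns_sub w z) (ns_sub z a)); first exact: cone_add.
by apply: Rp_ext => i /=; ring.
Qed.

Definition near_set T A (C : R) : Prop :=
  forall a, A a -> exists u, T u /\ enorm (ns_sub a u) <= C.

Definition pos_cone T : Prop := forall u s, T u -> 0 < s -> T (ns_scal s u).

Lemma near_closure T A C : near_set T A C -> near_set T (cl_set A) (Kp p * (1 + C)).
Proof.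
move=> HA a [bs [Hbs Hc]].
have [N HN] := Hc 1 Rlt_0_1.
have [u [Hu Hbu]] := HA _ (Hbs N).
exists u; split => //.
apply: Rle_trans (enorm_sub_triang a (bs N) u) _.
rewrite enorm_sub_sym; have := HN N (leqnn N); have := Kp_ge1 p; nra.
Qed.

Lemma recession_near_cone T A C : pos_cone T -> seq_closed T -> near_set T A C ->
  forall z, recession_cone A z -> T z.
Proof.
move=> Hcone Hcl HA z [h [yk [[Hh0 Hh] [Hyk Hc]]]].
have [us Hus] := choice _ (fun k => HA _ (Hyk k)).
apply: (Hcl (fun k => ns_scal (h k) (us k))); first by move=> k; apply: Hcone; [exact: (Hus k).1 |].
have Hsmall : seq_conv (fun k => ns_scal (h k) (ns_sub (yk k) (us k))) ns_zero.
  apply: (@conv_small _ _ (fun k => h k * C)).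
    move=> k; rewrite enorm_scal Rabs_right; last by have := Hh0 k; lra.
    by apply: Rmult_le_compat_l; [have := Hh0 k; lra | exact: (Hus k).2].
  by have := CV_mult _ _ 0 C Hh (Un_cv_const C); rewrite Rmult_0_l.
have := conv_sub Hc Hsmall; rewrite sub_zero; apply: conv_ext => k.
by apply: Rp_ext => i /=; ring.
Qed.

Lemma recession_lower_section A w z : recession_cone (lower_section A w) z -> P (ns_opp z).
Proof.
move=> [h [yk [[Hh0 Hh] [Hyk Hc]]]].
apply: (@cone_closed (fun k => ns_scal (h k) (ns_sub w (yk k)))).
  by move=> k; apply: cone_scal; [have := Hh0 k; lra | exact: (Hyk k).2].
have := conv_sub (conv_scal Hh (conv_const w)) Hc.
rewrite (_ : ns_sub _ z = ns_opp z); last by apply: Rp_ext => i /=; ring.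
by apply: conv_ext => k; apply: Rp_ext => i /=; ring.
Qed.

Lemma unbounded_recession A : ~ (exists M, forall a, A a -> enorm a <= M) ->
  exists z, z <> ns_zero /\ recession_cone A z.
Proof.
move=> Hunb.
have H : forall n, exists a, A a /\ INR n + 1 < enorm a.
  move=> n; apply: NNPP => Hn; apply: Hunb; exists (INR n + 1) => a Ha.
  by apply: Rnot_lt_le => hlt; apply: Hn; exists a.
have [zs Hzs] := choice _ H.
have Hgt : forall n, INR n + 1 < enorm (zs n) by move=> n; case: (Hzs n).
have Hs0 : forall n, 0 < / enorm (zs n).
  by move=> n; apply: Rinv_0_lt_compat; have := Hgt n; have := pos_INR n; lra.
have Hsz : forall n, enorm (ns_scal (/ enorm (zs n)) (zs n)) = 1.
  move=> n; rewrite enorm_scal Rabs_right; last by apply: Rle_ge; apply: Rlt_le.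
  by field; have := Hgt n; have := pos_INR n; lra.
have [phi [z [Hphi Hc]]] := BW_Rp (fun n => Req_le _ _ (Hsz n)).
exists z; split.
  move=> Hz0; rewrite Hz0 in Hc; have [N HN] := Hc (1 / 2) ltac:(lra).
  by have := HN N (leqnn N); rewrite sub_zero Hsz; lra.
exists (fun n => / enorm (zs (phi n))), (fun n => zs (phi n)); split; [split | split].
- by move=> n; apply: (Hs0 (phi n)).
- apply/Un_cv_iff => eps he; have [N HN] := inv_small he; exists N => n Hn.
  have h1 : / enorm (zs (phi n)) <= / (INR (phi n) + 1).
    by apply: Rinv_le_contravar; [have := pos_INR (phi n); lra | apply: Rlt_le].
  have h2 := Hs0 (phi n); rewrite Rminus_0_r Rabs_right; last lra.
  by have := inv_mono (incr_ge Hphi n); have := HN n Hn; lra.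
- by move=> n; case: (Hzs (phi n)).
- exact: conv_ext Hc.
Qed.

Lemma recession_zero A a : A a -> recession_cone A ns_zero.
Proof.
move=> Ha; exists (fun k => 1 * / (INR k + 1)), (fun _ => a).
split; [exact: cinv_to0plus Rlt_0_1 | split => //].
apply: (@conv_small _ _ (fun k => enorm a * / (INR k + 1))); last exact: Un_cv_cinv.
move=> k; rewrite enorm_scal Rabs_right; last by have := inv_pos k; lra.
by rewrite Rmult_1_l Rmult_comm; lra.
Qed.

Section NearCone.
Variables (T : Rp p -> Prop) (C : R).
Hypotheses (Tcone : pos_cone T) (Tclosed : seq_closed T).
Hypothesis Tpointed : forall z, T z -> P (ns_opp z) -> z = ns_zero.

Lemma P_bounded_near_cone A : (exists a, A a) -> near_set T A C -> P_bounded P A.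
Proof.
move=> [a Ha] HA z; split.
  by move=> [Hz HPz]; apply: Tpointed HPz; apply: (recession_near_cone Tcone Tclosed HA).
move=> ->; split; first exact: recession_zero Ha.
by rewrite (_ : ns_opp _ = ns_zero); [apply: cone0 | apply: Rp_ext => i /=; ring].
Qed.

Lemma lower_sections_bounded A w : near_set T A C ->
  exists M, forall a, lower_section A w a -> enorm a <= M.
Proof.
move=> HA; apply: NNPP => Hunb.
have [z [Hz0 Hz]] := unbounded_recession Hunb.
apply: Hz0; apply: Tpointed (recession_lower_section Hz).
have HS : near_set T (lower_section A w) C by move=> a [Ha _]; apply: HA.
exact: (recession_near_cone Tcone Tclosed HS Hz).
Qed.

End NearCone.

End OrderingCone.

(* Existence of minimal points: a closed subset of R^p with a bounded nonempty
   lower section has a P-minimal point.  A greedy sequence, each term almost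
   farthest from its predecessor inside the predecessor's lower section,
   accumulates at such a point. *)

Section ParetoExistence.
Variables (p : nat) (P : Rp p -> Prop).
Hypothesis HP : good_cone P.
Implicit Types (A : Rp p -> Prop) (zs : nat -> Rp p).

Definition descending zs : Prop := forall n m, (n <= m)%N -> P (ns_sub (zs n) (zs m)).

Lemma descending_steps zs : (forall n, P (ns_sub (zs n) (zs n.+1))) -> descending zs.
Proof.
move=> H n m /subnK <-; elim: (m - n)%N => [|k IH]; first by rewrite add0n sub_self; apply: cone0.
rewrite addSn (_ : ns_sub _ _ = ns_add (ns_sub (zs n) (zs (k + n)%N))
                                       (ns_sub (zs (k + n)%N) (zs (k + n).+1))).
  exact: cone_add.
by apply: Rp_ext => i /=; ring.
Qed.

Lemma descending_limit zs phi b : descending zs -> strict_incr phi ->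
  seq_conv (fun j => zs (phi j)) b -> forall n, P (ns_sub (zs n) b).
Proof.
move=> Hd Hphi Hb n.
apply: (@cone_closed _ _ HP (fun j => ns_sub (zs n) (zs (phi (j + n)%N)))).
  by move=> j; apply: Hd; apply: leq_trans (incr_ge Hphi _); apply: leq_addl.
apply: conv_sub (conv_const _) _.
by apply: (conv_subseq (u := fun j => zs (phi j)) Hb) => j; rewrite addSn.
Qed.

(* The steps of a bounded descending sequence vanish along a subsequence:
   a further extraction makes the successors converge to the same limit. *)
Lemma descending_successors zs M phi z : descending zs -> (forall n, enorm (zs n) <= M) ->
  strict_incr phi -> seq_conv (fun n => zs (phi n)) z ->
  exists psi, strict_incr psi /\ seq_conv (fun j => zs (phi (psi j))) z /\
              seq_conv (fun j => zs (phi (psi j)).+1) z.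
Proof.
move=> Hd HM Hphi Hc.
have [psi [b [Hpsi Hb]]] := BW_Rp (fun n => HM (phi n).+1).
have Hrho : strict_incr (fun j => (phi (psi j)).+1) by move=> j; rewrite ltnS; exact: (incr_comp Hphi Hpsi j).
have Hc' : seq_conv (fun j => zs (phi (psi j))) z := conv_subseq Hc Hpsi.
have Hbz : P (ns_sub b z).
  apply: (@cone_closed _ _ HP (fun j => ns_sub (zs (phi (psi j)).+1) z)).
    by move=> j; apply: descending_limit Hd Hphi Hc _.
  exact: conv_sub Hb (conv_const z).
have Hzb : P (ns_sub z b).
  apply: (@cone_closed _ _ HP (fun j => ns_sub (zs (phi (psi j))) b)).
    by move=> j; apply: descending_limit Hd Hrho Hb _.
  exact: conv_sub Hc' (conv_const b).
have Ezb : z = b.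
  apply: sub_eq0; apply: (cone_pointed HP Hzb).
  by rewrite (_ : ns_opp _ = ns_sub b z) //; apply: Rp_ext => i /=; ring.
by exists psi; rewrite -Ezb in Hb.
Qed.

Lemma almost_farthest A z M eps : A z -> 0 < eps ->
  (forall a, lower_section P A z a -> enorm a <= M) ->
  exists z', lower_section P A z z' /\
    forall a, lower_section P A z a -> enorm (ns_sub z a) < enorm (ns_sub z z') + eps.
Proof.
move=> Hz he HM.
pose E r := exists a, lower_section P A z a /\ r = enorm (ns_sub z a).
have Hbnd : bound E.
  exists (Kp p * (enorm z + M)) => r [a [Ha ->]].
  apply: Rle_trans (enorm_triang z (ns_opp a)) _; rewrite enorm_opp.
  by have := HM a Ha; have := Kp_ge1 p; have := enorm_ge0 z; nra.
have [m [Hub Hleast]] := completeness E Hbnd (ex_intro _ _ (ex_intro _ z (conj (lower_section_refl HP Hz) erefl))).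
apply: NNPP => Hno.
suff : m <= m - eps by lra.
apply: Hleast => r [a [Ha ->]]; apply: Rnot_lt_le => hlt; apply: Hno.
exists a; split => // a' Ha'.
by have := Hub _ (ex_intro _ a' (conj Ha' erefl)); lra.
Qed.

Lemma greedy_sequence A w0 M : A w0 -> (forall a, lower_section P A w0 a -> enorm a <= M) ->
  exists zs, forall n, lower_section P A w0 (zs n) /\ lower_section P A (zs n) (zs n.+1) /\
    forall a, lower_section P A (zs n) a ->
      enorm (ns_sub (zs n) a) < enorm (ns_sub (zs n) (zs n.+1)) + / (INR n + 1).
Proof.
move=> Hw0 HM.
have Hstep : forall nz : nat * Rp p, exists z', lower_section P A w0 nz.2 ->
    lower_section P A nz.2 z' /\ forall a, lower_section P A nz.2 a ->
      enorm (ns_sub nz.2 a) < enorm (ns_sub nz.2 z') + / (INR nz.1 + 1).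
  move=> [n z] /=; case: (classic (lower_section P A w0 z)) => Hz; last by exists z.
  have [z' Hz'] := almost_farthest (proj1 Hz) (inv_pos n)
    (fun a Ha => HM a (lower_section_trans HP Hz Ha)).
  by exists z'.
have [G HG] := choice _ Hstep.
pose zs := fix f n := if n is n'.+1 then G (n', f n') else w0.
have Hin : forall n, lower_section P A w0 (zs n).
  elim=> [|n IH]; first exact: lower_section_refl.
  exact: (lower_section_trans HP IH (proj1 (HG (n, zs n) IH))).
by exists zs => n; split => //; apply: (HG (n, zs n) (Hin n)).
Qed.

Theorem minimal_point_exists A w0 M : seq_closed A -> A w0 ->
  (forall a, lower_section P A w0 a -> enorm a <= M) -> exists d, minimal_pts A P d.
Proof.
move=> HA Hw0 HM.
have [zs Hzs] := greedy_sequence Hw0 HM.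
have Hdesc : descending zs by apply: descending_steps => n; case: (Hzs n) => _ [[_ ?] _].
have Hbnd : forall n, enorm (zs n) <= M by move=> n; apply: HM; case: (Hzs n).
have [phi [d [Hphi Hc]]] := BW_Rp Hbnd.
have [psi [Hpsi [Hc1 Hc2]]] := descending_successors Hdesc Hbnd Hphi Hc.
have Hd : A d by apply: HA Hc => n; case: (Hzs (phi n)) => [[]].
exists d; split => // z; split; last first.
  move=> ->; split => //; exists ns_zero; split; first exact: cone0.
  by rewrite sub_zero.
move=> [[q [Hq ->]] Hdq].
(* d - q lies below every term, so its distance to zs n is bounded by the n-th step *)
have Hlow : forall n, lower_section P A (zs n) (ns_sub d q).
  move=> n; split; first exact: Hdq.
  rewrite (_ : ns_sub (zs n) _ = ns_add (ns_sub (zs n) d) q).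
    exact: cone_add (descending_limit Hdesc Hphi Hc n) Hq.
  by apply: Rp_ext => i /=; ring.
pose nj j := phi (psi j).
have Hsmall : seq_conv (fun j => ns_sub (zs (nj j)) (ns_sub d q)) ns_zero.
  apply: (@conv_small _ _
    (fun j => enorm (ns_sub (zs (nj j)) (zs (nj j).+1)) + / (INR (nj j) + 1))).
    by move=> j; case: (Hzs (nj j)) => _ [_ H]; have := H _ (Hlow (nj j)); lra.
  rewrite -(Rplus_0_r 0); apply: CV_plus.
    by apply: conv_enorm0; have := conv_sub Hc1 Hc2; rewrite sub_self.
  exact: (Un_cv_subseq Un_cv_inv (incr_comp Hphi Hpsi)).
apply: (conv_unique _ Hc1).
have := conv_add Hsmall (conv_const (ns_sub d q)).
rewrite (_ : ns_add ns_zero _ = ns_sub d q); last by apply: Rp_ext => i /=; ring.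
by apply: conv_ext => j; apply: Rp_ext => i; rewrite /nj /=; ring.
Qed.

End ParetoExistence.

Lemma compact_bounded (X : NSpace) p (Sc : prodNS X (Rp p) -> Prop) :
  normed_space X -> seq_compact Sc ->
  exists M, forall s, Sc s -> ns_norm s.1 <= M /\ enorm s.2 <= M.
Proof.
move=> HX HSc; apply: NNPP => Hunb.
have H : forall n, exists s, Sc s /\ (INR n < ns_norm s.1 \/ INR n < enorm s.2).
  move=> n; apply: NNPP => Hn; apply: Hunb; exists (INR n) => s Hs.
  by split; apply: Rnot_lt_le => hlt; apply: Hn; exists s; split => //; [left | right].
have [u Hu] := choice _ H.
have [phi [[a b] [Hphi [_ Hc]]]] := HSc u (fun n => (Hu n).1).
have [Hc1 Hc2] := proj1 (prod_conv _ _ _ HX) Hc.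
have [N1 HN1] := Hc1 1 Rlt_0_1; have [N2 HN2] := Hc2 1 Rlt_0_1.
pose B := 1 + ns_norm a + Kp p * (1 + enorm b).
have [N3 HN3] := INR_unbounded B.
pose n := maxn N3 (maxn N1 N2).
have hB : 0 <= ns_norm a /\ 1 <= Kp p /\ 0 <= enorm b.
  by split; [apply: X_norm_ge0 | split; [apply: Kp_ge1 | apply: enorm_ge0]].
have h1 : ns_norm (u (phi n)).1 <= B.
  have := HN1 n (leq_trans (leq_maxl _ _) (leq_maxr _ _)).
  by have := X_norm_le HX (u (phi n)).1 a; rewrite /B; nra.
have h2 : enorm (u (phi n)).2 <= B.
  have := enorm_sub_triang (u (phi n)).2 b ns_zero; rewrite !sub_zero.
  by have := HN2 n (leq_trans (leq_maxr _ _) (leq_maxr _ _)); rewrite /B; nra.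
have h3 : B < INR (phi n).
  apply: Rlt_le_trans HN3 _; apply: le_INR; apply/leP.
  exact: leq_trans (leq_maxl _ _) (incr_ge Hphi n).
by case: (Hu (phi n)) => _; lra.
Qed.

Section Epiderivative.
Variables (X : NSpace) (p : nat) (P : Rp p -> Prop) (F : X -> Rp p -> Prop).
Variables (x : X) (y : Rp p) (l delta : R).
Hypotheses (HX : normed_space X) (HP : good_cone P).
Hypotheses (Hl : 0 < l) (Hd : 0 < delta).
Hypothesis Hlip : forall x1 x2 : X,
  ns_norm (ns_sub x1 x) < delta -> ns_norm (ns_sub x2 x) < delta ->
  forall y1, F x1 y1 -> exists y2, F x2 y2 /\ ns_norm (ns_sub y1 y2) <= l * ns_norm (ns_sub x1 x2).
Hypothesis Fxy : F x y.

Definition tangent : Rp p -> Prop := contingent_cone (set_plus (F x) P) y.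
Definition epideriv (v : X) : Rp p -> Prop := Defs.cont_deriv (epi_map F P) x y v.

Lemma tangent_pos_cone : pos_cone tangent.
Proof. by move=> u s; apply: contingent_cone_scal. Qed.

Lemma tangent_closed : seq_closed tangent.
Proof. exact: (contingent_cone_closed (Kp_pos p) (@enorm_sub_triang p)). Qed.

Lemma epideriv_closed v : seq_closed (epideriv v).
Proof.
move=> ws w Hws Hc.
apply: (@contingent_cone_closed _ _ _ _ (Kp_pos p) (@prod_quasi_triangle _ p HX)
         (fun n => (v, ws n)) (v, w) Hws).
by apply/(prod_conv _ _ _ HX); split; [apply: X_conv_const |].
Qed.

Lemma lipschitz_pullback h v1 w1 : 0 < h -> h * ns_norm v1 < delta ->
  set_plus (F (ns_add x (ns_scal h v1))) P (ns_add y (ns_scal h w1)) ->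
  exists g, enorm g <= l * ns_norm v1 /\ set_plus (F x) P (ns_add y (ns_scal h (ns_sub w1 g))).
Proof.
move=> hh hd [f [q [Hf [Hq Heq]]]].
have hx1 : ns_norm (ns_sub (ns_add x (ns_scal h v1)) x) < delta.
  by rewrite (X_sub_step HX) (X_normZ HX) Rabs_right; lra.
have hx : ns_norm (ns_sub x x) < delta by rewrite (X_sub_self HX) (X_norm0 HX).
have [y2 [Hy2 Hny]] := Hlip hx1 hx Hf.
rewrite (X_sub_step HX) (X_normZ HX) Rabs_right in Hny; last lra.
have hhi : 0 < / h by apply: Rinv_0_lt_compat.
exists (ns_scal (/ h) (ns_sub f y2)); split.
  rewrite enorm_scal Rabs_right; last lra.
  apply: (@Rle_trans _ (/ h * (l * (h * ns_norm v1)))); first by apply: Rmult_le_compat_l; lra.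
  by apply: Req_le; field; lra.
exists y2, q; split => //; split => //; apply: Rp_ext => i.
have := f_equal (fun g : Rp p => g i) Heq; rewrite /= => E.
by rewrite Rmult_plus_distr_l -Rplus_assoc E; field; lra.
Qed.

Lemma epideriv_near_tangent v : near_set tangent (epideriv v) (INR p * (l * (ns_norm v + 1))).
Proof.
move=> d [h [vk [[Hh0 Hh] [Hv Hm]]]].
have [Hv1 Hv2] := proj1 (prod_conv _ _ _ HX) Hv.
have hnv := X_norm_ge0 HX v.
have [K1 HK1] := Hv1 1 Rlt_0_1.
have hc : 0 < delta / (ns_norm v + 1) by apply: Rdiv_lt_0_compat; lra.
have [K2 HK2] := proj1 (Un_cv_iff _ _) Hh _ hc.
pose K := maxn K1 K2.
(* from rank K on, the pullback applies and gives corrections g_k of bounded size *)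
have Hg : forall k, exists g : Rp p, (K <= k)%N -> enorm g <= l * (ns_norm v + 1) /\
    set_plus (F x) P (ns_add y (ns_scal (h k) (ns_sub (vk k).2 g))).
  move=> k; case: (boolP (K <= k)%N) => Hk; last by exists ns_zero.
  have hn1 : ns_norm (vk k).1 < ns_norm v + 1.
    by have := HK1 k (leq_trans (leq_maxl _ _) Hk); have := X_norm_le HX (vk k).1 v; lra.
  have hhk : h k < delta / (ns_norm v + 1).
    by have := HK2 k (leq_trans (leq_maxr _ _) Hk); rewrite Rminus_0_r => /Rabs_def2 [].
  have hd1 : h k * ns_norm (vk k).1 < delta.
    rewrite (_ : delta = delta / (ns_norm v + 1) * (ns_norm v + 1)); last by field; lra.
    by have := X_norm_ge0 HX (vk k).1; have := Hh0 k; nra.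
  have [g [Hgn HgS]] := @lipschitz_pullback (h k) (vk k).1 (vk k).2 (Hh0 k) hd1 (Hm k).
  by exists g => _; split => //; apply: Rle_trans Hgn _; apply: Rmult_le_compat_l; lra.
have [G HG] := choice _ Hg.
have [psi [g [Hpsi Hgc]]] := @BW_Rp p (fun n => G (n + K)%N) _
  (fun n => proj1 (HG (n + K)%N (leq_addl _ _))).
have Hshift : strict_incr (fun n => psi n + K)%N by move=> n; rewrite ltn_add2r.
exists (ns_sub d g); split.
  exists (fun n => h (psi n + K)%N), (fun n => ns_sub (vk (psi n + K)%N).2 (G (psi n + K)%N)).
  split; [split | split].
  - by move=> n; apply: Hh0.
  - exact: Un_cv_subseq Hh Hshift.
  - exact: conv_sub (conv_subseq Hv2 Hshift) Hgc.
  - by move=> n; apply: (proj2 (HG _ (leq_addl _ _))).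
rewrite (_ : ns_sub d (ns_sub d g) = g); last by apply: Rp_ext => i /=; ring.
exact: lim_bound Hgc (fun n => proj1 (HG _ (leq_addl _ _))).
Qed.

Lemma epideriv_of_ray v w c : 0 < c ->
  (forall h, 0 < h <= c -> set_plus (F (ns_add x (ns_scal h v))) P (ns_add y (ns_scal h w))) ->
  epideriv v w.
Proof.
move=> hc Hray; exists (fun k => c * / (INR k + 1)), (fun _ => (v, w)).
split; first exact: cinv_to0plus.
split; first by apply/(prod_conv _ _ _ HX); split; [apply: X_conv_const | apply: conv_const].
move=> k; apply: Hray; split; first by apply: Rmult_lt_0_compat => //; apply: inv_pos.
by rewrite -{2}(Rmult_1_r c); apply: Rmult_le_compat_l; [lra | apply: inv_le1].
Qed.

(* DF_↑((x,y); v) is nonempty: moving along x + h v, the Lipschitz property keeps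
   F within l h ‖v‖ of y, and a large multiple of an interior point of P absorbs
   this error. *)
Lemma epideriv_nonempty v : exists w, epideriv v w.
Proof.
have hnv := X_norm_ge0 HX v.
have [e He] := cone_absorbs HP (Rmult_le_pos _ _ (Rlt_le _ _ Hl) hnv).
pose c := delta / (ns_norm v + 1).
have hc : 0 < c by apply: Rdiv_lt_0_compat; lra.
exists e; apply: (epideriv_of_ray hc) => h [hh hhc].
have hd1 : h * ns_norm v < delta.
  by rewrite (_ : delta = c * (ns_norm v + 1)); [nra | rewrite /c; field; lra].
have hx : ns_norm (ns_sub x x) < delta by rewrite (X_sub_self HX) (X_norm0 HX).
have hxh : ns_norm (ns_sub (ns_add x (ns_scal h v)) x) < delta.
  by rewrite (X_sub_step HX) (X_normZ HX) Rabs_right; lra.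
have [y2 [Hy2 Hny]] := Hlip hx hxh Fxy.
rewrite (X_norm_sub_sym HX) (X_sub_step HX) (X_normZ HX) Rabs_right in Hny; last lra.
have hhi : 0 < / h by apply: Rinv_0_lt_compat.
exists y2, (ns_scal h (ns_add e (ns_scal (/ h) (ns_sub y y2)))); split => //; split.
  apply: (cone_scal HP); first lra.
  apply: He; rewrite enorm_scal Rabs_right; last lra.
  apply: (@Rle_trans _ (/ h * (l * (h * ns_norm v)))); first by apply: Rmult_le_compat_l; lra.
  by apply: Req_le; field; lra.
by apply: Rp_ext => i /=; field; lra.
Qed.

Hypothesis HPE : proper_minimal_pts (F x) P y.

Lemma tangent_pointed z : tangent z -> P (ns_opp z) -> z = ns_zero.
Proof. by move=> Hz HPz; apply: (proj1 (proj2 HPE z)). Qed.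

Lemma gen_epideriv_nonempty v : exists d, gen_cont_epideriv F P x y v d.
Proof.
have [w0 Hw0] := epideriv_nonempty v.
have [M HM] := lower_sections_bounded HP tangent_pos_cone tangent_closed tangent_pointed w0
  (@epideriv_near_tangent v).
by have [d Hmin] := minimal_point_exists HP (@epideriv_closed v) Hw0 HM; exists d.
Qed.

Definition epideriv_union (Sc : prodNS X (Rp p) -> Prop) : Rp p -> Prop :=
  fun z => exists vw : prodNS X (Rp p), Sc vw /\
    exists d, gen_cont_epideriv F P x y (fst vw) d /\ z = ns_add (snd vw) d.

Lemma union_near_tangent Sc M : (forall s, Sc s -> ns_norm s.1 <= M /\ enorm s.2 <= M) ->
  near_set tangent (epideriv_union Sc) (Kp p * (M + INR p * (l * (M + 1)))).
Proof.
move=> HM a [[v w] [Hvw [d [[Hdv _] ->]]]].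
have [u [Hu Hdu]] := @epideriv_near_tangent v d Hdv.
have [hv hw] : ns_norm v <= M /\ enorm w <= M := HM _ Hvw.
exists u; split => //.
rewrite (_ : ns_sub (ns_add w d) u = ns_add w (ns_sub d u)); last by apply: Rp_ext => i /=; ring.
apply: Rle_trans (enorm_triang _ _) _; apply: Rmult_le_compat_l; first exact: Rlt_le (Kp_pos p).
suff : INR p * (l * (ns_norm v + 1)) <= INR p * (l * (M + 1)) by lra.
by apply: Rmult_le_compat_l; [apply: pos_INR | apply: Rmult_le_compat_l; lra].
Qed.

End Epiderivative.

Theorem proposition6p7 (X : NSpace) (p : nat) (P : Rp p -> Prop)
  (F : X -> Rp p -> Prop) (x : X) (y : Rp p) (Sc : prodNS X (Rp p) -> Prop) :
  normed_space X -> good_cone P ->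
  F x y -> lipschitz_around F x -> proper_minimal_pts (F x) P y ->
  (exists s0 : prodNS X (Rp p), Sc s0) -> seq_compact Sc ->
  P_bounded P
    (cl_set (fun z : Rp p => exists vw : prodNS X (Rp p), Sc vw /\
       exists d, gen_cont_epideriv F P x y (fst vw) d /\ z = ns_add (snd vw) d)).
Proof.
move=> HX HP Fxy [l [delta [Hl [Hd Hlip]]]] HPE [[v w] Hs0] HSc.
have [M HM] := compact_bounded HX HSc.
have [d Hdv] := gen_epideriv_nonempty HX HP Hl Hd Hlip Fxy HPE v.
apply: (P_bounded_near_cone HP (@tangent_pos_cone X p P F x y) (@tangent_closed X p P F x y)
          (@tangent_pointed X p P F x y HPE)).
  by exists (ns_add w d); apply: cl_set_self; exists (v, w); split => //; exists d.
exact: near_closure (union_near_tangent HX Hl Hd Hlip HM).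
Qed.
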